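(* Let $\alpha\ge -1/2$. For every $0\le x\le 2\sqrt{\alpha+1}$ and every $m\in\mathbb{N}\cup\{0\}$, $$\Gamma(\alpha+1)\sum_{n=0}^{2m+1}\frac{(-1)^n(x/2)^{2n}}{n!\,\Gamma(n+\alpha+1)}\ \le\ j_\alpha(x)\ \le\ \Gamma(\alpha+1)\sum_{n=0}^{2m}\frac{(-1)^n(x/2)^{2n}}{n!\,\Gamma(n+\alpha+1)}.$$
   Context: For $\alpha\ge -1/2$, the normalized Bessel function of order $\alpha$ is $j_\alpha(x)=\Gamma(\alpha+1)\sum_{n=0}^\infty\frac{(-1)^n(x/2)^{2n}}{n!\,\Gamma(n+\alpha+1)}$, where $\Gamma$ is the Euler gamma function. *)

From Stdlib Require Import Reals.
From Coquelicot Require Import Coquelicot.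
Open Scope R_scope.

Definition Gamma (s : R) : R :=
  RInt_gen (fun t => Rpower t (s - 1) * exp (- t)) (at_right 0) (Rbar_locally p_infty).

Definition bessel_term (alpha x : R) (n : nat) : R :=
  (-1) ^ n * (x / 2) ^ (2 * n) / (INR (Factorial.fact n) * Gamma (INR n + alpha + 1)).

Definition bessel_j (alpha x : R) : R :=
  Gamma (alpha + 1) * Series (bessel_term alpha x).

(* Partial sum Gamma(alpha+1) * sum_{n=0}^{N} bessel_term n  (sum_n is inclusive) *)
Definition bessel_partial (alpha x : R) (N : nat) : R :=
  Gamma (alpha + 1) * sum_n (bessel_term alpha x) N.

From Stdlib Require Import Reals Lra Lia FunctionalExtensionality.
From Coquelicot Require Import Coquelicot.
Open Scope R_scope.

(** For [0 <= x <= 2 sqrt (alpha + 1)] the moduli of the terms of the Bessel series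
    decrease to [0]: by [Gamma (s + 1) = s Gamma s] consecutive moduli have ratio
    [(x/2)^2 / ((n + 1) (n + alpha + 1)) <= 1 / (n + 1)].  The two bounds are then the
    classical enclosure of the sum of an alternating series between its partial sums of
    odd and even length.  Most of the work is the Gamma function itself: its integral
    converges because the integrand is dominated by [t ^ (s - 1)] near [0] and by a
    multiple of [t ^ -2] near [+oo], it is positive, and the functional equation follows
    by integration by parts. *)

Lemma at_right_0_lt (u : R) : 0 < u -> at_right 0 (fun a => 0 < a < u).
Proof.
  intros Hu. exists (mkposreal u Hu). intros a Ha Ha0.
  change (Rabs (a - 0) < u) in Ha. rewrite Rminus_0_r, Rabs_right in Ha by lra. lra.
Qed.

Lemma filter_prod_0_p_infty_pos :
  filter_prod (at_right 0) (Rbar_locally p_infty) (fun ab => 0 < fst ab /\ 0 < snd ab).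
Proof.
  apply Filter_prod with (fun a => 0 < a) (fun b => 0 < b).
  - exists (mkposreal 1 Rlt_0_1). intros a _ Ha. exact Ha.
  - exists 0. intros b Hb. exact Hb.
  - intros a b Ha Hb. split; assumption.
Qed.

Section IntegralOverPositiveReals.

Variable f : R -> R.
Hypothesis f_cont : forall t, 0 < t -> continuous f t.
Hypothesis f_ge0 : forall t, 0 < t -> 0 <= f t.

Lemma ex_RInt_pos (u v : R) : 0 < u -> 0 < v -> ex_RInt f u v.
Proof.
  intros Hu Hv. apply (ex_RInt_continuous (V := R_CompleteNormedModule)).
  intros z [Hz _]. apply f_cont. pose proof (Rmin_pos u v Hu Hv). lra.
Qed.

Lemma RInt_pos_ge0 (u v : R) : 0 < u <= v -> 0 <= RInt f u v.
Proof.
  intros [Hu Huv]. apply RInt_ge_0; [lra | apply ex_RInt_pos; lra |].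
  intros t Ht. apply f_ge0. lra.
Qed.

Lemma RInt_le_antiderivative (G g : R -> R) :
  (forall t, 0 < t -> is_derive G t (g t)) ->
  (forall t, 0 < t -> continuous g t) ->
  (forall t, 0 < t -> f t <= g t) ->
  forall u v, 0 < u <= v -> RInt f u v <= G v - G u.
Proof.
  intros HG Hg Hfg u v [Hu Huv].
  assert (HI : is_RInt g u v (G v - G u)).
  { apply (is_RInt_derive (V := R_CompleteNormedModule) G g);
      intros t [Ht _]; pose proof (Rmin_pos u v Hu ltac:(lra)).
    - apply HG. lra.
    - apply Hg. lra. }
  rewrite <- (is_RInt_unique _ _ _ _ HI).
  apply RInt_le; [lra | apply ex_RInt_pos; lra | exists (G v - G u); exact HI |].
  intros t Ht. apply Hfg. lra.
Qed.

Lemma Rabs_RInt_le_increment (G : R -> R) :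
  (forall u v, 0 < u <= v -> RInt f u v <= G v - G u) ->
  forall u v, 0 < u -> 0 < v -> Rabs (RInt f u v) <= Rabs (G v - G u).
Proof.
  intros HG u v Hu Hv.
  destruct (Rle_or_lt u v) as [Huv | Hvu].
  - pose proof (RInt_pos_ge0 u v (conj Hu Huv)). pose proof (HG u v (conj Hu Huv)).
    rewrite !Rabs_right; lra.
  - pose proof (RInt_pos_ge0 v u (conj Hv (Rlt_le _ _ Hvu))).
    pose proof (HG v u (conj Hv (Rlt_le _ _ Hvu))).
    rewrite <- (opp_RInt_swap f v u) by (apply ex_RInt_pos; lra).
    change (Rabs (- RInt f v u) <= Rabs (G v - G u)).
    rewrite Rabs_Ropp, Rabs_minus_sym, !Rabs_right; lra.
Qed.

(* Cauchy criterion: both tails are controlled by increments of [G0] near [0] and of [G1] near [+oo]. *)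
Lemma ex_RInt_gen_0_p_infty (G0 G1 : R -> R) (l0 l1 : R) :
  (forall u v, 0 < u <= v -> RInt f u v <= G0 v - G0 u) ->
  (forall u v, 0 < u <= v -> RInt f u v <= G1 v - G1 u) ->
  filterlim G0 (at_right 0) (locally l0) ->
  filterlim G1 (Rbar_locally p_infty) (locally l1) ->
  ex_RInt_gen f (at_right 0) (Rbar_locally p_infty).
Proof.
  intros HG0 HG1 L0 L1.
  apply (filterlimi_locally_cauchy (U := R_CompleteSpace)).
  - eapply filter_imp; [| exact filter_prod_0_p_infty_pos].
    intros [a b] [Ha Hb]; simpl. split.
    + exists (RInt f a b). apply (RInt_correct (V := R_CompleteNormedModule)).
      apply ex_RInt_pos; assumption.
    + intros y1 y2 H1 H2.
      now rewrite <- (is_RInt_unique _ _ _ _ H1), <- (is_RInt_unique _ _ _ _ H2).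
  - intros eps.
    set (e4 := pos_div_2 (pos_div_2 eps)).
    apply filterlim_locally with (eps := e4) in L0.
    apply filterlim_locally with (eps := e4) in L1.
    exists (fun ab => (0 < fst ab /\ 0 < snd ab) /\
                 (ball l0 e4 (G0 (fst ab)) /\ ball l1 e4 (G1 (snd ab)))).
    split.
    + apply (filter_and _ _ filter_prod_0_p_infty_pos).
      apply Filter_prod with (1 := L0) (2 := L1). intros a b Ha Hb. split; assumption.
    + intros [a b] [a' b'] [[Ha Hb] [Ba Bb]] [[Ha' Hb'] [Ba' Bb']] y y' Hy Hy'.
      simpl in *.
      rewrite <- (is_RInt_unique _ _ _ _ Hy), <- (is_RInt_unique _ _ _ _ Hy').
      change (Rabs (RInt f a' b' - RInt f a b) < eps).
      assert (Hsplit : RInt f a' b' - RInt f a b = RInt f a' a + RInt f b b').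
      { rewrite <- (RInt_Chasles f a' b b') by (apply ex_RInt_pos; lra).
        rewrite <- (RInt_Chasles f a' a b) by (apply ex_RInt_pos; lra).
        change (RInt f a' a + RInt f a b + RInt f b b' - RInt f a b
                = RInt f a' a + RInt f b b'). ring. }
      rewrite Hsplit.
      pose proof (Rabs_RInt_le_increment G0 HG0 a' a Ha' Ha).
      pose proof (Rabs_RInt_le_increment G1 HG1 b b' Hb Hb').
      change (Rabs (G0 a - l0) < e4) in Ba. change (Rabs (G0 a' - l0) < e4) in Ba'.
      change (Rabs (G1 b - l1) < e4) in Bb. change (Rabs (G1 b' - l1) < e4) in Bb'.
      apply Rabs_def2 in Ba, Ba', Bb, Bb'.
      assert (Rabs (G0 a - G0 a') < eps / 2) by (apply Rabs_def1; simpl in *; lra).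
      assert (Rabs (G1 b' - G1 b) < eps / 2) by (apply Rabs_def1; simpl in *; lra).
      eapply Rle_lt_trans; [apply Rabs_triang | lra].
Qed.

Lemma RInt_le_is_RInt_gen (l u v : R) :
  is_RInt_gen f (at_right 0) (Rbar_locally p_infty) l -> 0 < u <= v -> RInt f u v <= l.
Proof.
  intros Hl [Hu Huv]. apply Rnot_lt_le. intros Hlt.
  set (eps := mkposreal (RInt f u v - l) ltac:(lra)).
  assert (Hnear : filter_prod (at_right 0) (Rbar_locally p_infty)
    (fun ab => exists y, is_RInt f (fst ab) (snd ab) y /\ ball l eps y))
    by (apply Hl, locally_ball).
  assert (Houter : filter_prod (at_right 0) (Rbar_locally p_infty)
    (fun ab => 0 < fst ab < u /\ v < snd ab)).
  { apply Filter_prod with (fun a => 0 < a < u) (fun b => v < b).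
    - exact (at_right_0_lt u Hu).
    - exists v. tauto.
    - intros a b Ha Hb. split; assumption. }
  destruct (filter_ex _ (filter_and _ _ Hnear Houter))
    as [[a b] [[y [Hy Hball]] [Ha Hb]]].
  simpl in *. rewrite <- (is_RInt_unique _ _ _ _ Hy) in Hball.
  change (Rabs (RInt f a b - l) < RInt f u v - l) in Hball.
  assert (Hsplit : RInt f a b = RInt f a u + RInt f u v + RInt f v b).
  { rewrite <- (RInt_Chasles f a v b) by (apply ex_RInt_pos; lra).
    rewrite <- (RInt_Chasles f a u v) by (apply ex_RInt_pos; lra).
    reflexivity. }
  pose proof (RInt_pos_ge0 a u ltac:(lra)). pose proof (RInt_pos_ge0 v b ltac:(lra)).
  apply Rabs_def2 in Hball. lra.
Qed.

End IntegralOverPositiveReals.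

Lemma Rpower_lim_0 (s : R) : 0 < s -> filterlim (fun t => Rpower t s) (at_right 0) (locally 0).
Proof.
  intros Hs. unfold Rpower.
  apply (filterlim_comp _ _ _ (fun t => s * ln t) exp _ (Rbar_locally m_infty));
    [| exact is_lim_exp_m].
  eapply filterlim_comp; [exact is_lim_ln_0 |].
  intros P [M HM]. exists (M / s). intros y Hy. apply HM.
  apply (Rmult_lt_compat_l s) in Hy; [| exact Hs].
  replace (s * (M / s)) with M in Hy by (field; lra). exact Hy.
Qed.

Lemma div_lim_p_infty (K : R) : filterlim (fun t => K / t) (Rbar_locally p_infty) (locally 0).
Proof.
  pose proof (is_lim_scal_l _ K _ _
                (is_lim_inv (fun t => t) p_infty p_infty (is_lim_id _) ltac:(discriminate))) as H.
  simpl in H. rewrite Rmult_0_r in H. exact H.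
Qed.

Definition gamma_integrand (s t : R) : R := Rpower t (s - 1) * exp (- t).

Lemma gamma_integrand_pos (s t : R) : 0 < gamma_integrand s t.
Proof. apply Rmult_lt_0_compat; [unfold Rpower |]; apply exp_pos. Qed.

Lemma gamma_integrand_continuous (s t : R) : 0 < t -> continuous (gamma_integrand s) t.
Proof.
  intros Ht. apply (ex_derive_continuous (K := R_AbsRing) (V := R_NormedModule)).
  unfold gamma_integrand, Rpower. auto_derive. lra.
Qed.

Lemma gamma_integrand_le_Rpower (s t : R) : 0 < t -> gamma_integrand s t <= Rpower t (s - 1).
Proof.
  intros Ht. unfold gamma_integrand. rewrite <- (Rmult_1_r (Rpower t (s - 1))) at 2.
  apply Rmult_le_compat_l; [left; apply exp_pos |].
  rewrite <- exp_0. left. apply exp_increasing. lra.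
Qed.

(* From [t / c <= exp (t / c)], raised to the power [c]. *)
Lemma Rpower_mul_exp_le (c t : R) : 0 < c -> 0 < t -> Rpower t c * exp (- t) <= Rpower c c.
Proof.
  intros Hc Ht.
  assert (Htc : 0 < t / c) by (apply Rdiv_lt_0_compat; lra).
  assert (Hexp : t / c <= exp (t / c)) by (pose proof (exp_ineq1 (t / c)); lra).
  assert (Hpow : Rpower (t / c) c <= exp t).
  { replace (exp t) with (Rpower (exp (t / c)) c).
    - apply Rle_Rpower_l; lra.
    - unfold Rpower. rewrite ln_exp. f_equal. field. lra. }
  replace (Rpower t c) with (Rpower c c * Rpower (t / c) c)
    by (rewrite Rpower_mult_distr by lra; f_equal; field; lra).
  assert (Hee : exp t * exp (- t) = 1) by (rewrite <- exp_plus, Rplus_opp_r; apply exp_0).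
  assert (0 < Rpower c c) by (unfold Rpower; apply exp_pos).
  pose proof (exp_pos (- t)).
  rewrite Rmult_assoc. rewrite <- (Rmult_1_r (Rpower c c)) at 2.
  apply Rmult_le_compat_l; [lra |]. rewrite <- Hee.
  apply Rmult_le_compat_r; lra.
Qed.

Lemma gamma_integrand_le_div_pow (s t : R) (k : nat) :
  0 < s - 1 + INR k -> 0 < t ->
  gamma_integrand s t <= Rpower (s - 1 + INR k) (s - 1 + INR k) / t ^ k.
Proof.
  intros Hc Ht. pose proof (pow_lt t k Ht).
  apply Rmult_le_reg_r with (t ^ k); [assumption |].
  unfold Rdiv. rewrite Rmult_assoc, Rinv_l, Rmult_1_r by lra.
  replace (gamma_integrand s t * t ^ k) with (Rpower t (s - 1 + INR k) * exp (- t)).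
  - apply Rpower_mul_exp_le; assumption.
  - unfold gamma_integrand. rewrite Rpower_plus, Rpower_pow by assumption. ring.
Qed.

Lemma gamma_integrand_lim_0 (s : R) : 1 < s ->
  filterlim (gamma_integrand s) (at_right 0) (locally 0).
Proof.
  intros Hs.
  apply (filterlim_le_le (fun _ => 0) _ (fun t => Rpower t (s - 1)) (Finite 0)).
  - exists (mkposreal 1 Rlt_0_1). intros t _ Ht. split.
    + left. apply gamma_integrand_pos.
    + apply gamma_integrand_le_Rpower. exact Ht.
  - apply filterlim_const.
  - apply Rpower_lim_0. lra.
Qed.

Lemma gamma_integrand_lim_p_infty (s : R) : 0 < s ->
  filterlim (gamma_integrand s) (Rbar_locally p_infty) (locally 0).
Proof.
  intros Hs.
  apply (filterlim_le_le (fun _ => 0) _ (fun t => Rpower s s / t) (Finite 0)).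
  - exists 0. intros t Ht. split.
    + left. apply gamma_integrand_pos.
    + pose proof (gamma_integrand_le_div_pow s t 1 ltac:(simpl; lra) Ht) as H.
      simpl in H. rewrite Rmult_1_r in H. replace (s - 1 + 1) with s in H by ring. exact H.
  - apply filterlim_const.
  - apply div_lim_p_infty.
Qed.

Lemma is_RInt_gen_Gamma (s : R) : 0 < s ->
  is_RInt_gen (gamma_integrand s) (at_right 0) (Rbar_locally p_infty) (Gamma s).
Proof.
  intros Hs.
  assert (Hcont := gamma_integrand_continuous s).
  assert (Hge0 : forall t, 0 < t -> 0 <= gamma_integrand s t)
    by (intros t _; left; apply gamma_integrand_pos).
  set (K := Rpower (s - 1 + INR 2) (s - 1 + INR 2)).
  apply (RInt_gen_correct (V := R_CompleteNormedModule)).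
  apply (ex_RInt_gen_0_p_infty _ Hcont Hge0
           (fun t => Rpower t s / s) (fun t => - K / t) (0 / s) 0).
  - apply (RInt_le_antiderivative _ Hcont _ (fun t => Rpower t (s - 1))).
    + intros t Ht. unfold Rpower. auto_derive; [lra |].
      replace ((s - 1) * ln t) with (s * ln t + - ln t) by ring.
      rewrite exp_plus, (exp_Ropp (ln t)), exp_ln by lra. field. lra.
    + intros t Ht. apply (ex_derive_continuous (K := R_AbsRing) (V := R_NormedModule)).
      unfold Rpower. auto_derive. lra.
    + intros t Ht. apply gamma_integrand_le_Rpower. exact Ht.
  - apply (RInt_le_antiderivative _ Hcont _ (fun t => K / t ^ 2)).
    + intros t Ht. auto_derive; [lra |]. field. lra.
    + intros t Ht. apply (ex_derive_continuous (K := R_AbsRing) (V := R_NormedModule)).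
      auto_derive. nra.
    + intros t Ht. apply gamma_integrand_le_div_pow; [simpl; lra | exact Ht].
  - apply (filterlim_comp _ _ _ (fun t => Rpower t s) (fun y => y / s) _ (locally 0));
      [exact (Rpower_lim_0 s Hs) |].
    apply (ex_derive_continuous (K := R_AbsRing) (V := R_NormedModule) (fun y => y / s) 0).
    auto_derive. lra.
  - apply div_lim_p_infty.
Qed.

Lemma Gamma_pos (s : R) : 0 < s -> 0 < Gamma s.
Proof.
  intros Hs.
  apply Rlt_le_trans with (RInt (gamma_integrand s) 1 2).
  - apply RInt_gt_0; [lra | intros; apply gamma_integrand_pos |].
    intros t Ht. apply gamma_integrand_continuous. lra.
  - apply (RInt_le_is_RInt_gen (gamma_integrand s)).
    + intros t Ht. apply gamma_integrand_continuous. exact Ht.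
    + intros t _. left. apply gamma_integrand_pos.
    + apply is_RInt_gen_Gamma. exact Hs.
    + lra.
Qed.

Lemma is_derive_gamma_integrand (s t : R) : 0 < t ->
  is_derive (gamma_integrand (s + 1)) t (s * gamma_integrand s t - gamma_integrand (s + 1) t).
Proof.
  intros Ht. unfold gamma_integrand, Rpower. auto_derive; [lra |].
  replace (s + 1 - 1) with s by ring.
  replace ((s - 1) * ln t) with (s * ln t + - ln t) by ring.
  rewrite exp_plus, (exp_Ropp (ln t)), exp_ln by lra. field. lra.
Qed.

(* Integration by parts: the boundary terms [t ^ s * exp (- t)] vanish at [0] and [+oo]. *)
Lemma Gamma_succ (s : R) : 0 < s -> Gamma (s + 1) = s * Gamma s.
Proof.
  intros Hs.
  set (dF := fun t => s * gamma_integrand s t - gamma_integrand (s + 1) t).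
  assert (HdF : forall t, 0 < t -> Derive (gamma_integrand (s + 1)) t = dF t).
  { intros t Ht. apply is_derive_unique, is_derive_gamma_integrand. exact Ht. }
  assert (Hpos : forall (P : R -> Prop), (forall t, 0 < t -> P t) ->
            filter_prod (at_right 0) (Rbar_locally p_infty)
              (fun ab => forall t, Rmin (fst ab) (snd ab) <= t <= Rmax (fst ab) (snd ab) -> P t)).
  { intros P HP. eapply filter_imp; [| exact filter_prod_0_p_infty_pos].
    intros [a b] [Ha Hb] t [Ht _]. apply HP. pose proof (Rmin_pos a b Ha Hb). simpl in *. lra. }
  assert (Hparts : is_RInt_gen (Derive (gamma_integrand (s + 1)))
                     (at_right 0) (Rbar_locally p_infty) (0 - 0)).
  { apply is_RInt_gen_Derive.
    - apply Hpos. intros t Ht. eexists. apply is_derive_gamma_integrand. exact Ht.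
    - apply Hpos. intros t Ht. apply continuous_ext_loc with dF.
      + exists (mkposreal t Ht). intros y Hy.
        change (Rabs (y - t) < t) in Hy. apply Rabs_def2 in Hy.
        symmetry. apply HdF. lra.
      + apply (continuous_minus (V := R_NormedModule)).
        * apply (continuous_scal_r (K := R_AbsRing) (V := R_NormedModule) s).
          apply gamma_integrand_continuous. exact Ht.
        * apply gamma_integrand_continuous. exact Ht.
    - apply gamma_integrand_lim_0. lra.
    - apply gamma_integrand_lim_p_infty. lra. }
  pose proof (is_RInt_gen_minus _ _ _ _
                (is_RInt_gen_scal _ s _ (is_RInt_gen_Gamma s Hs)) Hparts) as Hsucc.
  apply (is_RInt_gen_ext _ (gamma_integrand (s + 1))) in Hsucc.
  - change (Gamma (s + 1))
      with (RInt_gen (gamma_integrand (s + 1)) (at_right 0) (Rbar_locally p_infty)).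
    rewrite (is_RInt_gen_unique (V := R_CompleteNormedModule) _ _ Hsucc).
    change (s * Gamma s - (0 - 0) = s * Gamma s). ring.
  - eapply filter_imp; [| exact filter_prod_0_p_infty_pos].
    intros [a b] [Ha Hb] t [Ht _]. simpl in *.
    rewrite HdF by (pose proof (Rmin_pos a b Ha Hb); lra).
    unfold dF. change (s * gamma_integrand s t - (s * gamma_integrand s t - gamma_integrand (s + 1) t)
                       = gamma_integrand (s + 1) t). ring.
Qed.

Lemma Un_decreasing_of_le_div_succ (u : nat -> R) :
  (forall n, 0 <= u n) -> (forall n, u (S n) <= u n / INR (S n)) -> Un_decreasing u.
Proof.
  intros Hge0 Hle n. eapply Rle_trans; [apply Hle |].
  assert (1 <= INR (S n)) by (rewrite S_INR; pose proof (pos_INR n); lra).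
  unfold Rdiv. rewrite <- (Rmult_1_r (u n)) at 2.
  apply Rmult_le_compat_l; [apply Hge0 |].
  rewrite <- Rinv_1. apply Rinv_le_contravar; lra.
Qed.

(* [u n <= u 0 / n!], and [/ n!] tends to [0]. *)
Lemma Un_cv_0_of_le_div_succ (u : nat -> R) :
  (forall n, 0 <= u n) -> (forall n, u (S n) <= u n / INR (S n)) -> Un_cv u 0.
Proof.
  intros Hge0 Hle.
  assert (Hfact : forall n, u n <= u 0%nat * (1 ^ n / INR (Factorial.fact n))).
  { induction n as [| n IH].
    - simpl. lra.
    - eapply Rle_trans; [apply Hle |].
      rewrite fact_simpl, mult_INR, pow1. rewrite pow1 in IH.
      pose proof (lt_0_INR (S n) (Nat.lt_0_succ n)). pose proof (INR_fact_lt_0 n).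
      unfold Rdiv in *. rewrite Rinv_mult.
      apply Rmult_le_reg_r with (INR (S n)); [assumption |].
      replace (u 0%nat * (1 * (/ INR (S n) * / INR (Factorial.fact n))) * INR (S n))
        with (u 0%nat * (1 * / INR (Factorial.fact n))) by (field; lra).
      rewrite Rmult_assoc, Rinv_l, Rmult_1_r by lra. exact IH. }
  apply is_lim_seq_Reals.
  apply (is_lim_seq_le_le (fun _ => 0) u (fun n => u 0%nat * (1 ^ n / INR (Factorial.fact n)))).
  - intros n. split; [apply Hge0 | apply Hfact].
  - apply is_lim_seq_const.
  - replace (Finite 0) with (Rbar_mult (u 0%nat) 0) by (simpl; f_equal; ring).
    apply is_lim_seq_scal_l, is_lim_seq_Reals, cv_speed_pow_fact.
Qed.

Lemma alternating_series_bounds (u : nat -> R) (m : nat) :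
  Un_decreasing u -> Un_cv u 0 ->
  sum_n (tg_alt u) (2 * m + 1) <= Series (tg_alt u) <= sum_n (tg_alt u) (2 * m).
Proof.
  intros Hdec Hcv.
  destruct (alternated_series u Hdec Hcv) as [l Hl].
  replace (Series (tg_alt u)) with l.
  - rewrite !sum_n_Reals. replace (2 * m + 1)%nat with (S (2 * m)) by lia.
    exact (alternated_series_ineq u l m Hdec Hcv Hl).
  - symmetry. apply is_series_unique, is_series_Reals. exact Hl.
Qed.

Definition bessel_term_abs (alpha x : R) (n : nat) : R :=
  (x / 2) ^ (2 * n) / (INR (Factorial.fact n) * Gamma (INR n + alpha + 1)).

Lemma bessel_term_tg_alt (alpha x : R) : bessel_term alpha x = tg_alt (bessel_term_abs alpha x).
Proof.
  apply functional_extensionality. intros n.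
  unfold bessel_term, bessel_term_abs, tg_alt, Rdiv. ring.
Qed.

Lemma bessel_term_abs_ge0 (alpha x : R) (n : nat) : -1 < alpha -> 0 <= bessel_term_abs alpha x n.
Proof.
  intros Ha. pose proof (pos_INR n). pose proof (INR_fact_lt_0 n).
  pose proof (Gamma_pos (INR n + alpha + 1) ltac:(lra)).
  unfold bessel_term_abs. rewrite pow_mult.
  apply Rmult_le_pos; [apply pow_le, pow2_ge_0 |].
  left. apply Rinv_0_lt_compat, Rmult_lt_0_compat; assumption.
Qed.

Lemma bessel_term_abs_succ (alpha x : R) (n : nat) : -1 < alpha ->
  bessel_term_abs alpha x (S n)
  = bessel_term_abs alpha x n * ((x / 2) ^ 2 / (INR (S n) * (INR n + alpha + 1))).
Proof.
  intros Ha. pose proof (pos_INR n). pose proof (INR_fact_lt_0 n).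
  pose proof (Gamma_pos (INR n + alpha + 1) ltac:(lra)).
  unfold bessel_term_abs.
  replace (INR (S n) + alpha + 1) with ((INR n + alpha + 1) + 1) by (rewrite S_INR; ring).
  rewrite Gamma_succ, fact_simpl, mult_INR by lra.
  replace (2 * S n)%nat with (2 * n + 2)%nat by lia. rewrite pow_add, S_INR.
  field. lra.
Qed.

Lemma bessel_term_abs_le_div_succ (alpha x : R) (n : nat) :
  -1 < alpha -> (x / 2) ^ 2 <= alpha + 1 ->
  bessel_term_abs alpha x (S n) <= bessel_term_abs alpha x n / INR (S n).
Proof.
  intros Ha Hx. rewrite bessel_term_abs_succ by assumption.
  pose proof (bessel_term_abs_ge0 alpha x n Ha). pose proof (pos_INR n).
  assert (Hn : 0 < INR (S n)) by (rewrite S_INR; lra).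
  replace ((x / 2) ^ 2 / (INR (S n) * (INR n + alpha + 1)))
    with (/ INR (S n) * ((x / 2) ^ 2 / (INR n + alpha + 1))) by (field; lra).
  replace (bessel_term_abs alpha x n / INR (S n))
    with (bessel_term_abs alpha x n * (/ INR (S n) * 1)) by (field; lra).
  apply Rmult_le_compat_l; [assumption |].
  apply Rmult_le_compat_l; [left; apply Rinv_0_lt_compat; assumption |].
  apply Rmult_le_reg_r with (INR n + alpha + 1); [lra |].
  unfold Rdiv. rewrite Rmult_assoc, Rinv_l by lra. lra.
Qed.

Theorem mainTheorem7 (alpha : R) (halpha : -1/2 <= alpha)
  (x : R) (hx0 : 0 <= x) (hx1 : x <= 2 * sqrt (alpha + 1)) (m : nat) :
  bessel_partial alpha x (2 * m + 1) <= bessel_j alpha x /\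
  bessel_j alpha x <= bessel_partial alpha x (2 * m).
Proof.
  assert (Ha : -1 < alpha) by lra.
  assert (Hx : (x / 2) ^ 2 <= alpha + 1).
  { rewrite <- (pow2_sqrt (alpha + 1)) by lra.
    apply pow_incr. lra. }
  pose proof (Gamma_pos (alpha + 1) ltac:(lra)) as HG.
  pose proof (bessel_term_abs_ge0 alpha x) as Hge0.
  pose proof (fun n => bessel_term_abs_le_div_succ alpha x n Ha Hx) as Hle.
  destruct (alternating_series_bounds (bessel_term_abs alpha x) m
              (Un_decreasing_of_le_div_succ _ (fun n => Hge0 n Ha) Hle)
              (Un_cv_0_of_le_div_succ _ (fun n => Hge0 n Ha) Hle)) as [Hodd Heven].
  unfold bessel_partial, bessel_j. rewrite bessel_term_tg_alt.
  split; apply Rmult_le_compat_l; lra.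
Qed.
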